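(* Let $\mathcal V$ be a multivector field on $X$ and let $S$ be an isolated invariant set. Then $(\operatorname{cl}S,\operatorname{mo}S)$ is a saturated index pair for $S$.
   Context: $X$ is a finite $T_0$ topological space. For $A\subset X$, $\operatorname{cl}A$ is its closure and $\operatorname{mo}A:=\operatorname{cl}A\setminus A$. $A$ is locally closed if it is the intersection of an open and a closed subset of $X$. $H$ denotes relative singular homology. A multivector is a nonempty locally closed subset of $X$; a multivector field $\mathcal V$ on $X$ is a partition of $X$ into multivectors. For $x\in X$, $[x]$ denotes the element of $\mathcal V$ containing $x$. A multivector $V$ is critical if $H(\operatorname{cl}V,\operatorname{mo}V)\neq0$, regular otherwise. Put $\Pi_{\mathcal V}(x):=[x]\cup\operatorname{cl}\{x\}$ and $\Pi_{\mathcal V}(A):=\bigcup_{x\in A}\Pi_{\mathcal V}(x)$. A $\mathbb Z$-interval is $\mathbb Z\cap I$ for a real interval $I$. A solution in $A\subset X$ is a map $\varphi:D\to A$ on a $\mathbb Z$-interval $D$ with $\varphi(i+1)\in\Pi_{\mathcal V}(\varphi(i))$ whenever $i,i+1\in D$; it is full if $D=\mathbb Z$, and a path if $D$ is bounded, its endpoints being $\varphi(\min D)$ and $\varphi(\max D)$. A full solution $\varphi$ is essential if for every $t\in\mathbb Z$ with $[\varphi(t)]$ regular, the set $\{s\in\mathbb Z:\varphi(s)\notin[\varphi(t)]\}$ is unbounded below and unbounded above. $\operatorname{Inv}A$ is the set of $x\in A$ such that there is an essential full solution $\varphi$ with image in $A$ and $\varphi(0)=x$; $A$ is invariant if $\operatorname{Inv}A=A$.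 A closed set $N$ isolates an invariant set $S\subset N$ if (a) every path in $N$ with both endpoints in $S$ has image contained in $S$, and (b) $\Pi_{\mathcal V}(S)\subset N$. An invariant set is an isolated invariant set if some closed set isolates it. An index pair for an isolated invariant set $S$ is a pair $(P_1,P_2)$ of closed subsets of $X$ with $P_2\subset P_1$ such that (IP1) if $x\in P_2$ and $y\in\Pi_{\mathcal V}(x)\cap P_1$ then $y\in P_2$; (IP2) if $x\in P_1$ and $\Pi_{\mathcal V}(x)\setminus P_1\neq\emptyset$ then $x\in P_2$; (IP3) $S=\operatorname{Inv}(P_1\setminus P_2)$. It is saturated if $S=P_1\setminus P_2$. *)

From HB Require Import structures.
From mathcomp Require Import all_boot all_order all_algebra.
Set Implicit Arguments. Unset Strict Implicit. Unset Printing Implicit Defensive.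
Import Order.TTheory GRing.Theory Num.Theory.

Section FiniteSpaces.
Variable T : finType.

Definition is_topology (opens : {set {set T}}) : Prop :=
  [/\ set0 \in opens, [set: T] \in opens,
      (forall A B, A \in opens -> B \in opens -> A :|: B \in opens) &
      (forall A B, A \in opens -> B \in opens -> A :&: B \in opens)].

Definition T0 (opens : {set {set T}}) : Prop :=
  forall x y : T, x != y ->
    exists2 U, U \in opens & (x \in U) != (y \in U).

Variable opens : {set {set T}}.

Definition is_closed (A : {set T}) : bool := ~: A \in opens.

Definition cl (A : {set T}) : {set T} :=
  \bigcap_(C | is_closed C && (A \subset C)) C.

Definition mo (A : {set T}) : {set T} := cl A :\: A.

Definition locally_closed (A : {set T}) : Prop :=
  exists U C, [/\ U \in opens, is_closed C & A = U :&: C].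

Definition multivector_field (V : {set {set T}}) : Prop :=
  partition V [set: T] /\ (forall M, M \in V -> locally_closed M).

Variable V : {set {set T}}.

Definition mv (x : T) : {set T} := pblock V x.

Definition Pi (x : T) : {set T} := mv x :|: cl [set x].

Definition PiS (A : {set T}) : {set T} := \bigcup_(x in A) Pi x.

Definition is_path_in (A : {set T}) (phi : int -> T) (a b : int) : Prop :=
  (a <= b)%R /\
  (forall i : int, (a <= i)%R -> (i <= b)%R -> phi i \in A) /\
  (forall i : int, (a <= i)%R -> (i < b)%R -> phi (i + 1)%R \in Pi (phi i)).

Definition full_solution_in (A : {set T}) (phi : int -> T) : Prop :=
  (forall i : int, phi i \in A) /\
  (forall i : int, phi (i + 1)%R \in Pi (phi i)).

Variable critical : {set T} -> Prop.

Definition regular (M : {set T}) : Prop := ~ critical M.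

Definition essential (phi : int -> T) : Prop :=
  forall t : int, regular (mv (phi t)) ->
    (forall n : int, exists s : int, (s < n)%R /\ phi s \notin mv (phi t)) /\
    (forall n : int, exists s : int, (n < s)%R /\ phi s \notin mv (phi t)).

Definition Inv (A : {set T}) (x : T) : Prop :=
  x \in A /\
  exists phi : int -> T, [/\ full_solution_in A phi, essential phi & phi 0%R = x].

Definition invariant (A : {set T}) : Prop := forall x, x \in A <-> Inv A x.

Definition isolates (N S : {set T}) : Prop :=
  [/\ is_closed N, S \subset N,
      (forall (phi : int -> T) (a b : int), is_path_in N phi a b ->
          phi a \in S -> phi b \in S ->
          forall i : int, (a <= i)%R -> (i <= b)%R -> phi i \in S) &
      PiS S \subset N].

Definition isolated_invariant (S : {set T}) : Prop :=
  invariant S /\ exists N, isolates N S.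

Definition index_pair (S P1 P2 : {set T}) : Prop :=
  [/\ is_closed P1 /\ is_closed P2 /\ P2 \subset P1,
      (forall x y, x \in P2 -> y \in Pi x :&: P1 -> y \in P2),
      (forall x, x \in P1 -> Pi x :\: P1 != set0 -> x \in P2) &
      (forall x, x \in S <-> Inv (P1 :\: P2) x)].

Definition saturated_index_pair (S P1 P2 : {set T}) : Prop :=
  index_pair S P1 P2 /\ S = P1 :\: P2.

End FiniteSpaces.

From HB Require Import structures.
From mathcomp Require Import all_boot all_order all_algebra.
From mathcomp Require Import zify.
Set Implicit Arguments. Unset Strict Implicit. Unset Printing Implicit Defensive.
Import Order.TTheory GRing.Theory Num.Theory.

(* Isolation by N forbids a solution from leaving S and coming back within
   two steps, as long as the intermediate point lies in N.  Applied to
   x -> y -> x with y in [x] this shows that S is a union of multivectors;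
   applied to s -> x -> y along closures it shows that S is convex for the
   specialization order, so that mo S is closed.  Hence cl S and mo S are
   closed, S = cl S \ mo S, and a point of mo S cannot flow back into S
   while a point of S only flows into cl S. *)

Section FiniteTopology.
Variables (T : finType) (opens : {set {set T}}).
Hypothesis top : is_topology opens.

Local Notation cl := (cl opens).
Local Notation is_closed := (is_closed opens).

Lemma closed_set0 : is_closed set0.
Proof. by case: top => _ HT _ _; rewrite /is_closed setC0. Qed.

Lemma closed_setU (A B : {set T}) :
  is_closed A -> is_closed B -> is_closed (A :|: B).
Proof. by case: top => _ _ _ HI; rewrite /is_closed setCU; apply: HI. Qed.

Lemma closed_cl (A : {set T}) : is_closed (cl A).
Proof.
case: top => H0 _ HU _; rewrite /is_closed /cl setC_bigcap.
by apply: (big_ind (fun X => X \in opens)) => // C /andP[].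
Qed.

Lemma subset_cl (A : {set T}) : A \subset cl A.
Proof. by apply/bigcapsP => C /andP[]. Qed.

Lemma cl_minimal (A C : {set T}) : is_closed C -> A \subset C -> cl A \subset C.
Proof. by move=> hC hA; apply: bigcap_inf; rewrite hC hA. Qed.

Lemma cl1_subset (x z : T) : z \in cl [set x] -> cl [set z] \subset cl [set x].
Proof.
move=> zx; apply: cl_minimal; first exact: closed_cl.
by rewrite sub1set.
Qed.

Lemma clP (A : {set T}) (y : T) :
  reflect (exists2 a, a \in A & y \in cl [set a]) (y \in cl A).
Proof.
apply: (iffP idP) => [yA | [a aA]]; last first.
  by apply/subsetP; apply: cl_minimal; rewrite ?closed_cl // sub1set
    (subsetP (subset_cl A)).
have clA_sub : cl A \subset \bigcup_(a in A) cl [set a].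
  apply: cl_minimal.
    apply: (big_ind is_closed closed_set0 closed_setU) => a _.
    exact: closed_cl.
  apply/subsetP => a aA; apply/bigcupP; exists a => //.
  by rewrite (subsetP (subset_cl _)) ?set11.
by case/bigcupP: (subsetP clA_sub y yA) => a; exists a.
Qed.

Lemma cl_setD_mo (A : {set T}) : cl A :\: mo opens A = A.
Proof.
apply/setP => x; rewrite /mo !inE.
case xA: (x \in A); rewrite ?andbT ?andbF //=.
- exact: (subsetP (subset_cl A)).
- by case: (x \in cl A).
Qed.

End FiniteTopology.

Section IsolatedInvariantSet.
Variables (T : finType) (opens : {set {set T}}) (V : {set {set T}}).
Variables N S : {set T}.
Hypothesis N_isolates_S : isolates opens V N S.

Local Notation cl := (cl opens).
Local Notation mo := (mo opens).
Local Notation Pi := (Pi opens V).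

Lemma mem_Pi_cl1 (x y : T) : y \in cl [set x] -> y \in Pi x.
Proof. by rewrite /Pi inE => ->; rewrite orbT. Qed.

Lemma mem_Pi_mv (x y : T) : y \in mv V x -> y \in Pi x.
Proof. by rewrite /Pi inE => ->. Qed.

Lemma Pi_subset_N (x y : T) : x \in S -> y \in Pi x -> y \in N.
Proof.
case: N_isolates_S => _ _ _ PiSN xS yx.
by apply: (subsetP PiSN); apply/bigcupP; exists x.
Qed.

Lemma isolated_two_step (a b c : T) : a \in S -> c \in S -> b \in N ->
  b \in Pi a -> c \in Pi b -> b \in S.
Proof.
case: N_isolates_S => _ sSN isoN _ aS cS bN ab bc.
pose phi (i : int) := if i == 0 then a else if i == 1 then b else c.
have phi_path : is_path_in opens V N phi 0 2.
  split=> //; split=> i i_ge0 i_le.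
  - have [->|[->|->]] : i = 0 \/ i = 1 \/ i = 2 by lia.
    + exact: (subsetP sSN).
    + by [].
    + exact: (subsetP sSN).
  - by have [->|->] : i = 0 \/ i = 1 by lia.
exact: (isoN phi 0 2 phi_path aS cS 1).
Qed.

Lemma isolated_cl_convex (x z y : T) : x \in S -> z \in cl [set x] ->
  y \in cl [set z] -> y \in S -> z \in S.
Proof.
move=> xS zx yz yS; apply: (isolated_two_step xS yS).
- exact: (Pi_subset_N xS (mem_Pi_cl1 zx)).
- exact: mem_Pi_cl1.
- exact: mem_Pi_cl1.
Qed.

Hypothesis top : is_topology opens.

Lemma cl_mo : cl (mo S) \subset mo S.
Proof.
apply/subsetP => y /(clP top) [z]; rewrite /mo inE => /andP[zNS zS] yz.
have /(clP top) [x xS zx] := zS.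
rewrite inE; apply/andP; split.
- by apply: contraNN zNS; apply: isolated_cl_convex zx yz.
- by apply/(clP top); exists x => //; apply: (subsetP (cl1_subset top zx)).
Qed.

Lemma closed_mo : is_closed opens (mo S).
Proof.
have -> : mo S = cl (mo S) by apply/eqP; rewrite eqEsubset cl_mo subset_cl.
exact: closed_cl.
Qed.

Lemma mo_Pi_closed (x y : T) : x \in mo S -> y \in Pi x :&: cl S -> y \in mo S.
Proof.
rewrite /mo inE => /andP[xNS /(clP top) [s sS xs]] /setIP[yx yS].
rewrite inE yS andbT; apply: contraNN xNS => {}yS.
exact: (isolated_two_step sS yS (Pi_subset_N sS (mem_Pi_cl1 xs)) (mem_Pi_cl1 xs)).
Qed.

Hypothesis V_partition : partition V [set: T].

Lemma mv_sym (x y : T) : y \in mv V x -> x \in mv V y.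
Proof.
case/andP: V_partition => /eqP cov /andP[triv _] yx.
have xV : x \in cover V by rewrite cov inE.
rewrite /mv -(@eq_pblock _ V x y triv xV) in yx.
by rewrite /mv -(eqP yx) mem_pblock.
Qed.

Lemma mv_subset_isolated (x y : T) : x \in S -> y \in mv V x -> y \in S.
Proof.
move=> xS yx; apply: (isolated_two_step xS xS).
- exact: (Pi_subset_N xS (mem_Pi_mv yx)).
- exact: mem_Pi_mv.
- exact/mem_Pi_mv/mv_sym.
Qed.

Lemma Pi_subset_cl (x : T) : x \in S -> Pi x \subset cl S.
Proof.
move=> xS; apply/subsetP => y; rewrite /Pi inE => /orP[yx | yx].
- exact: (subsetP (subset_cl _ _) _ (mv_subset_isolated xS yx)).
- by apply/(clP top); exists x.
Qed.

Lemma mo_of_exit (x : T) : x \in cl S -> Pi x :\: cl S != set0 -> x \in mo S.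
Proof.
move=> xS exit; rewrite /mo inE xS andbT; apply: contraNN exit => {}xS.
by rewrite setD_eq0 Pi_subset_cl.
Qed.

End IsolatedInvariantSet.

Theorem proposition5p3 (T : finType) (opens : {set {set T}})
  (Htop : is_topology opens) (HT0 : T0 opens)
  (V : {set {set T}}) (HV : multivector_field opens V)
  (critical : {set T} -> Prop)
  (S : {set T}) (HS : isolated_invariant opens V critical S) :
  saturated_index_pair opens V critical S (cl opens S) (mo opens S).
Proof.
case: HS => S_inv [N isoN]; case: HV => V_partition _.
have S_eq := cl_setD_mo opens S.
split; last by rewrite S_eq.
split.
- split; [exact: closed_cl | split; [exact: closed_mo isoN Htop | exact: subsetDl]].
- exact: mo_Pi_closed isoN Htop.
- exact: mo_of_exit isoN Htop V_partition.
- by rewrite S_eq.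
Qed.
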